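(* Let $\varepsilon\in(0,1/256]$, let $\mathcal S=\{S_1,\dots,S_K,S_\infty\}$ be an $(\varepsilon,c)$-ordered family, and let $\rho\in\{1,\dots,\lceil1/\varepsilon\rceil\}^K$. Let $x^*$ be an extreme point of $P(\mathcal S,\rho)$ and suppose that, whenever $x^*$ has a fractional component in $S_h$ with $h\in[K]$, one has $c_{\max,h}/c_{\min,h}\le(1+\varepsilon)^{d_h}$ for some $d_h\le\min\{h,\lceil2\sqrt{C_\varepsilon}\rceil\}$. Then $x^*$ can be rounded to an integral vector $\bar x\in P(\mathcal S,\rho)\cap\{0,1\}^n$ with $c^T\bar x\le(1+2\varepsilon)\,c^Tx^*$.
   Context: Minimum Knapsack data: $n$ items with costs $c\in\mathbb{R}^n_{\ge0}$, weights $w\in\mathbb{R}^n_{\ge0}$, target $b$; items are indexed so that $1=c_1\ge c_2\ge\dots\ge c_n$. $C_\varepsilon=\lceil\log_{1+\varepsilon}(1/\varepsilon)\rceil$. For a family $\mathcal S=\{S_1,\dots,S_K,S_\infty\}$ of pairwise disjoint subsets of $\{2,\dots,n\}$ and $\rho\in\{1,\dots,\lceil1/\varepsilon\rceil\}^K$, $P(\mathcal S,\rho)$ is the set of $x\in\mathbb{R}^n$ with: $x_1=1$; $w^Tx\ge b$; $\sum_{i\in S_k}x_i=\rho_k$ for $k\in[K]$ with $\rho_k<\lceil1/\varepsilon\rceil$; $\sum_{i\in S_k}x_i\ge\rho_k$ for $k\in[K]$ with $\rho_k=\lceil1/\varepsilon\rceil$; $x_i=0$ for $i\in\{2,\dots,n\}\setminus\bigcup_{k\in[K]\cup\{\infty\}}S_k$;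 $0\le x_i\le1$ for $i\in\bigcup_{k\in[K]\cup\{\infty\}}S_k$. Let $c_{\min,k}=\min_{i\in S_k}c_i$ and $c_{\max,k}=\max_{i\in S_k}c_i$ for $k\in[K]$. The family $\mathcal S$ is $(\varepsilon,c)$-ordered if (a) $c_{\min,k}\ge c_{\max,k+1}$ for all $k\in[K-1]$, and (b) $\min\{c_{\min,K},\varepsilon\}\ge\max_{i\in S_\infty}c_i$. *)

From Stdlib Require Import Reals Lra Lia.
Open Scope R_scope.

(* ceiling of a real, as an integer: ceil x = - floor (- x), floor y = up y - 1 *)
Definition ceilZ (x : R) : Z := (1 - up (- x))%Z.

Definition Nceil (eps : R) : nat := Z.to_nat (ceilZ (/ eps)).

Definition Ceps (eps : R) : Z := ceilZ (ln (/ eps) / ln (1 + eps)).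

Definition Dbound (eps : R) : nat := Z.to_nat (ceilZ (2 * sqrt (IZR (Ceps eps)))).

(* rsum f m = f 1 + ... + f m  (items are indexed 1..n) *)
Fixpoint rsum (f : nat -> R) (m : nat) : R :=
  match m with
  | O => 0
  | S m' => rsum f m' + f m
  end.

(* Vectors are functions nat -> R, only coordinates 1..n matter.
   The family S = {S_1,...,S_K,S_inf}: S k (for 1 <= k <= K) and Sinf, as
   boolean predicates on item indices. *)

Definition covered (K : nat) (S : nat -> nat -> bool) (Sinf : nat -> bool) (i : nat) : Prop :=
  (exists k, (1 <= k <= K)%nat /\ S k i = true) \/ Sinf i = true.

Definition setsum (n : nat) (Sk : nat -> bool) (x : nat -> R) : R :=
  rsum (fun i => if Sk i then x i else 0) n.

Definition inP (eps : R) (n : nat) (w : nat -> R) (b : R) (K : nat)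
    (S : nat -> nat -> bool) (Sinf : nat -> bool) (rho : nat -> nat) (x : nat -> R) : Prop :=
  x 1%nat = 1 /\
  rsum (fun i => w i * x i) n >= b /\
  (forall k, (1 <= k <= K)%nat ->
     ((rho k < Nceil eps)%nat -> setsum n (S k) x = INR (rho k)) /\
     (rho k = Nceil eps -> setsum n (S k) x >= INR (rho k))) /\
  (forall i, (2 <= i <= n)%nat -> ~ covered K S Sinf i -> x i = 0) /\
  (forall i, (2 <= i <= n)%nat -> covered K S Sinf i -> 0 <= x i <= 1).

Definition extreme_point (eps : R) (n : nat) (w : nat -> R) (b : R) (K : nat)
    (S : nat -> nat -> bool) (Sinf : nat -> bool) (rho : nat -> nat) (x : nat -> R) : Prop :=
  inP eps n w b K S Sinf rho x /\
  forall (y z : nat -> R) (lam : R),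
    inP eps n w b K S Sinf rho y -> inP eps n w b K S Sinf rho z ->
    0 < lam < 1 ->
    (forall i, (1 <= i <= n)%nat -> x i = lam * y i + (1 - lam) * z i) ->
    forall i, (1 <= i <= n)%nat -> y i = z i.

Definition valid_family (n K : nat) (S : nat -> nat -> bool) (Sinf : nat -> bool) : Prop :=
  (forall k i, (1 <= k <= K)%nat -> S k i = true -> (2 <= i <= n)%nat) /\
  (forall i, Sinf i = true -> (2 <= i <= n)%nat) /\
  (forall k l i, (1 <= k <= K)%nat -> (1 <= l <= K)%nat -> k <> l ->
      S k i = true -> S l i = true -> False) /\
  (forall k i, (1 <= k <= K)%nat -> S k i = true -> Sinf i = true -> False).

(* (eps,c)-ordered: (a) c_min,k >= c_max,k+1; (b) min{c_min,K, eps} >= max_{S_inf} c,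
   written out elementwise. *)
Definition eps_c_ordered (eps : R) (c : nat -> R) (K : nat)
    (S : nat -> nat -> bool) (Sinf : nat -> bool) : Prop :=
  (forall k i j, (1 <= k)%nat -> (k + 1 <= K)%nat ->
     S k i = true -> S (k + 1)%nat j = true -> c j <= c i) /\
  (forall j, Sinf j = true ->
     c j <= eps /\ (forall i, (1 <= K)%nat -> S K i = true -> c j <= c i)).

From Stdlib Require Import Reals ZArith Lra Lia Classical.
Open Scope R_scope.

(* An admissible direction at [x] is a vector supported on the fractional coordinates of [x]
   that keeps every tight group sum fixed; moving along it by a small step in either sense stays
   in [P(S, rho)] as long as it also keeps [w^T x].  At an extreme point the only such
   weight-free direction is [0], and since any two admissible directions with separated
   supports can be combined into a weight-free one, the fractional coordinates of [x*] are
   either a single item [j] outside every tight group, or two items [a, a'] of one tight group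
   with [x_a + x_a' = 1].  In the first case set [x_j := 1]: its cost is at most
   [(1 + eps)^d eps c^T x <= 2 eps c^T x] because a non-tight group carries at least [1/eps]
   units of items of comparable cost (or [c_j <= eps] in [S_inf]).  In the second case move the
   mass onto the item of larger weight: the extra cost is at most
   [((1 + eps)^d - 1) c_a' <= 2 eps h c_a' <= 2 eps c^T x], because item 1 and each of the
   [h - 1] groups preceding [S_h] cost at least [c_a'].  Both bounds use [eps d <= 1/2], which
   holds for [d <= ceil(2 sqrt C_eps)] when [eps <= 1/256]. *)

Lemma rsum_ext n f g :
  (forall i, (1 <= i <= n)%nat -> f i = g i) -> rsum f n = rsum g n.
Proof.
  induction n as [|n IH]; intros Hfg; simpl; [reflexivity|].
  rewrite IH by (intros; apply Hfg; lia).
  rewrite Hfg by lia; reflexivity.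
Qed.

Lemma rsum_plus n f g : rsum (fun i => f i + g i) n = rsum f n + rsum g n.
Proof. induction n as [|n IH]; simpl; [lra|]. rewrite IH; ring. Qed.

Lemma rsum_scal n a f : rsum (fun i => a * f i) n = a * rsum f n.
Proof. induction n as [|n IH]; simpl; [ring|]. rewrite IH; ring. Qed.

Lemma rsum_const n a : rsum (fun _ => a) n = INR n * a.
Proof. induction n as [|n IH]; simpl rsum; [simpl; ring|]. rewrite IH, S_INR; ring. Qed.

Lemma rsum_le n f g :
  (forall i, (1 <= i <= n)%nat -> f i <= g i) -> rsum f n <= rsum g n.
Proof.
  induction n as [|n IH]; intros Hfg; simpl; [lra|].
  assert (rsum f n <= rsum g n) by (apply IH; intros; apply Hfg; lia).
  specialize (Hfg (S n) ltac:(lia)); lra.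
Qed.

Lemma rsum_swap n m (g : nat -> nat -> R) :
  rsum (fun i => rsum (fun k => g k i) m) n = rsum (fun k => rsum (fun i => g k i) n) m.
Proof.
  induction m as [|m IH]; simpl.
  - rewrite rsum_const; ring.
  - rewrite rsum_plus, IH; reflexivity.
Qed.

Lemma rsum_01 n f :
  (forall i, (1 <= i <= n)%nat -> f i = 0 \/ f i = 1) -> exists m, rsum f n = INR m.
Proof.
  induction n as [|n IH]; intros Hf; simpl; [exists O; reflexivity|].
  destruct IH as [m Hm]; [intros; apply Hf; lia|].
  destruct (Hf (S n) ltac:(lia)) as [E|E]; rewrite E, Hm.
  - exists m; ring.
  - exists (S m); rewrite S_INR; reflexivity.
Qed.

Lemma nat_diff_between_0_2 p q : 0 < INR p - INR q < 2 -> INR p - INR q = 1.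
Proof.
  intros H. assert (Hqp : (q < p)%nat) by (apply INR_lt; lra).
  assert (Hpq : (p < q + 2)%nat) by (apply INR_lt; rewrite plus_INR; simpl; lra).
  replace p with (S q) by lia. rewrite S_INR; ring.
Qed.

Lemma rsum_indicator_le m (p : nat -> bool) a : 0 <= a ->
  (forall k l, (1 <= k <= m)%nat -> (1 <= l <= m)%nat -> p k = true -> p l = true -> k = l) ->
  rsum (fun k => if p k then a else 0) m <= a.
Proof.
  intros Ha. induction m as [|m IH]; intros Huniq; simpl; [lra|].
  destruct (p (S m)) eqn:Hp.
  - rewrite (rsum_ext m _ (fun _ => 0)), rsum_const; [lra|].
    intros k Hk. destruct (p k) eqn:Hpk; [|reflexivity].
    specialize (Huniq k (S m) ltac:(lia) ltac:(lia) Hpk Hp); lia.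
  - rewrite Rplus_0_r. apply IH. intros k l Hk Hl. apply Huniq; lia.
Qed.

Definition upd (x : nat -> R) (j : nat) (v : R) : nat -> R :=
  fun i => if Nat.eqb i j then v else x i.

Definition basis (j : nat) : nat -> R := upd (fun _ => 0) j 1.

Lemma upd_same x j v : upd x j v j = v.
Proof. unfold upd; rewrite Nat.eqb_refl; reflexivity. Qed.

Lemma upd_other x j v i : i <> j -> upd x j v i = x i.
Proof. intros Hij; unfold upd; destruct (Nat.eqb_spec i j); [contradiction|reflexivity]. Qed.

Lemma rsum_upd n f j v : (1 <= j <= n)%nat -> rsum (upd f j v) n = rsum f n + (v - f j).
Proof.
  induction n as [|n IH]; intros Hj; [lia|]. simpl.
  destruct (Nat.eq_dec j (S n)) as [->|Hne].
  - rewrite upd_same, (rsum_ext n _ f); [ring|].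
    intros i Hi; apply upd_other; lia.
  - rewrite IH, upd_other by lia; ring.
Qed.

Lemma rsum_mul_upd n f x j v : (1 <= j <= n)%nat ->
  rsum (fun i => f i * upd x j v i) n = rsum (fun i => f i * x i) n + f j * (v - x j).
Proof.
  intros Hj.
  rewrite (rsum_ext n _ (upd (fun i => f i * x i) j (f j * v))), rsum_upd by
    (exact Hj || (intros i _; unfold upd; destruct (Nat.eqb_spec i j); subst; reflexivity)).
  ring.
Qed.

Lemma setsum_upd n G x j v : (1 <= j <= n)%nat ->
  setsum n G (upd x j v) = setsum n G x + (if G j then v - x j else 0).
Proof.
  intros Hj. unfold setsum.
  rewrite (rsum_ext n _ (upd (fun i => if G i then x i else 0) j (if G j then v else 0))),
    rsum_upd by
    (exact Hj || (intros i _; unfold upd; destruct (Nat.eqb_spec i j); subst; reflexivity)).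
  destruct (G j); ring.
Qed.

Lemma setsum_comb n G a u b v :
  setsum n G (fun i => a * u i + b * v i) = a * setsum n G u + b * setsum n G v.
Proof.
  unfold setsum. rewrite <- !rsum_scal, <- rsum_plus.
  apply rsum_ext; intros i _; destruct (G i); ring.
Qed.

Lemma setsum_shift n G x s d :
  setsum n G (fun i => x i + s * d i) = setsum n G x + s * setsum n G d.
Proof.
  unfold setsum. rewrite <- rsum_scal, <- rsum_plus.
  apply rsum_ext; intros i _; destruct (G i); ring.
Qed.

Lemma setsum_basis n G j : (1 <= j <= n)%nat -> setsum n G (basis j) = if G j then 1 else 0.
Proof.
  intros Hj. unfold basis. rewrite setsum_upd by exact Hj.
  unfold setsum. rewrite (rsum_ext n _ (fun _ => 0)), rsum_const by (intros i _; destruct (G i); reflexivity).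
  destruct (G j); ring.
Qed.

Lemma ceilZ_bounds x : x <= IZR (ceilZ x) < x + 1.
Proof. unfold ceilZ. rewrite minus_IZR. destruct (archimed (- x)). simpl; lra. Qed.

Lemma INR_Z_to_nat_le z y : IZR z <= y -> 0 <= y -> INR (Z.to_nat z) <= y.
Proof.
  intros Hz Hy. destruct (Z_le_gt_dec 0 z).
  - rewrite INR_IZR_INZ, Z2Nat.id by assumption; lra.
  - replace (Z.to_nat z) with O by lia; simpl; lra.
Qed.

Lemma Nceil_ge_inv eps : 0 < eps -> / eps <= INR (Nceil eps).
Proof.
  intros He. unfold Nceil. destruct (ceilZ_bounds (/ eps)) as [Hlo _].
  pose proof (Rinv_0_lt_compat _ He).
  rewrite INR_IZR_INZ, Z2Nat.id; [lra|]. apply le_IZR; lra.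
Qed.

Lemma ln_le_sub_1 z : 0 < z -> ln z <= z - 1.
Proof. intros Hz. pose proof (exp_ineq1_le (ln z)) as H. rewrite exp_ln in H; lra. Qed.

Lemma ln_1_plus_ge eps : 0 < eps -> eps / (1 + eps) <= ln (1 + eps).
Proof.
  intros He. pose proof (ln_le_sub_1 (/ (1 + eps)) ltac:(apply Rinv_0_lt_compat; lra)) as H.
  rewrite ln_Rinv in H by lra.
  replace (/ (1 + eps) - 1) with (- (eps / (1 + eps))) in H by (field; lra). lra.
Qed.

(* Apply [ln z <= z - 1] to the fourth root [r] of [1/eps]; [r >= 4] makes [4 (r - 1) <= 3/64 r^4]. *)
Lemma eps_ln_inv_le eps : 0 < eps <= 1 / 256 -> eps * ln (/ eps) <= 3 / 64.
Proof.
  intros He. set (y := / eps).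
  assert (Hy : 256 <= y) by (unfold y; rewrite <- (Rinv_inv 256); apply Rinv_le_contravar; lra).
  assert (Hepsy : eps * y = 1) by (unfold y; field; lra).
  set (s := sqrt y). set (r := sqrt s).
  assert (Hs : s * s = y) by (apply sqrt_sqrt; lra).
  assert (Hs0 : 0 <= s) by apply sqrt_pos.
  assert (Hr : r * r = s) by (apply sqrt_sqrt; lra).
  assert (Hr0 : 0 <= r) by apply sqrt_pos.
  assert (Hr4 : r ^ 4 = y) by (rewrite <- Hs, <- Hr; ring).
  assert (Hs_ge : 16 <= s) by nra.
  assert (Hr_ge : 4 <= r) by nra.
  assert (Hln : ln y = 4 * ln r) by (rewrite <- Hr4, ln_pow by lra; simpl; ring).
  pose proof (ln_le_sub_1 r ltac:(lra)).
  rewrite Hln. nra.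
Qed.

Lemma eps_Dbound_le eps : 0 < eps <= 1 / 256 -> eps * INR (Dbound eps) <= 1 / 2.
Proof.
  intros He.
  set (L := ln (/ eps)). set (A := L / ln (1 + eps)).
  assert (HL0 : 0 <= L).
  { unfold L. rewrite ln_Rinv by lra.
    assert (ln eps < ln 1) by (apply ln_increasing; lra). rewrite ln_1 in *; lra. }
  assert (Hln1 : eps / (1 + eps) <= ln (1 + eps)) by (apply ln_1_plus_ge; lra).
  assert (HA : eps * A <= (1 + eps) * L).
  { assert (Hpos : 0 < ln (1 + eps)) by (pose proof (Rdiv_lt_0_compat eps (1 + eps)); lra).
    assert (Hmul : eps <= (1 + eps) * ln (1 + eps)).
    { replace eps with ((1 + eps) * (eps / (1 + eps))) at 1 by (field; lra).
      apply Rmult_le_compat_l; lra. }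
    apply Rmult_le_reg_r with (ln (1 + eps)); [exact Hpos|].
    unfold A, Rdiv. replace (eps * (L * / ln (1 + eps)) * ln (1 + eps)) with (eps * L) by (field; lra).
    nra. }
  pose proof (eps_ln_inv_le eps He) as HepsL. fold L in HepsL.
  unfold Dbound, Ceps. fold L A.
  destruct (ceilZ_bounds A) as [_ HC].
  set (C := IZR (ceilZ A)) in *. set (s := sqrt C).
  assert (Hs0 : 0 <= s) by apply sqrt_pos.
  (* [(eps s)^2 = eps^2 C < eps (1 + eps) L + eps^2 <= (11/50)^2]. *)
  assert (Hepss : eps * s <= 11 / 50).
  { destruct (Rle_dec C 0) as [HC0|HC0].
    - unfold s. rewrite sqrt_neg_0 by assumption. lra.
    - assert (Hss : s * s = C) by (apply sqrt_sqrt; lra). nra. }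
  destruct (ceilZ_bounds (2 * s)) as [_ HD].
  assert (INR (Z.to_nat (ceilZ (2 * s))) <= 2 * s + 1) by (apply INR_Z_to_nat_le; lra).
  nra.
Qed.

Lemma pow_1_plus_le eps m : 0 < eps -> 2 * eps * INR m <= 1 -> (1 + eps) ^ m <= 1 + 2 * eps * INR m.
Proof.
  intros He. induction m as [|m IH]; intros Hm; [simpl; lra|].
  rewrite S_INR in *. pose proof (pos_INR m).
  assert ((1 + eps) ^ m <= 1 + 2 * eps * INR m) by (apply IH; lra).
  simpl. nra.
Qed.

Lemma pow_1_plus_eps_Dbound eps d : 0 < eps <= 1 / 256 -> (d <= Dbound eps)%nat ->
  1 <= (1 + eps) ^ d <= 1 + 2 * eps * INR d /\ 2 * eps * INR d <= 1.
Proof.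
  intros He Hd. apply le_INR in Hd. pose proof (eps_Dbound_le eps He).
  assert (2 * eps * INR d <= 1) by nra.
  split; [split|assumption].
  - apply pow_R1_Rle; lra.
  - apply pow_1_plus_le; lra.
Qed.

Lemma scaled_abs_bound s t a m : Rabs s <= t -> t * Rabs a <= m -> - m <= s * a <= m.
Proof.
  intros Hs Ha. assert (Hsa : Rabs (s * a) <= m) by (rewrite Rabs_mult; pose proof (Rabs_pos a); nra).
  pose proof (Rle_abs (s * a)). pose proof (Rle_abs (- (s * a))). rewrite Rabs_Ropp in *. lra.
Qed.

Lemma uniform_step (P : nat -> Prop) (a s : nat -> R) m :
  (forall i, P i -> a i <> 0 -> 0 < s i) ->
  exists t, 0 < t /\ forall i, (i <= m)%nat -> P i -> a i <> 0 -> t * Rabs (a i) <= s i.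
Proof.
  intros Hs.
  assert (Hone : forall i, exists t, 0 < t /\ (P i -> a i <> 0 -> t * Rabs (a i) <= s i)).
  { intros i. destruct (classic (P i /\ a i <> 0)) as [[HP Ha]|Hno].
    - pose proof (Rabs_pos_lt _ Ha). pose proof (Hs i HP Ha).
      exists (s i / Rabs (a i)). split; [apply Rdiv_lt_0_compat; assumption|].
      intros _ _. right; field; lra.
    - exists 1. split; [lra|]. intros HP Ha; exfalso; tauto. }
  induction m as [|m [t [Ht Hstep]]].
  - destruct (Hone 0%nat) as [t [Ht Hstep]]. exists t. split; [exact Ht|].
    intros i Hi. replace i with 0%nat by lia. exact Hstep.
  - destruct (Hone (S m)) as [t' [Ht' Hstep']]. exists (Rmin t t').
    split; [apply Rmin_pos; assumption|].
    intros i Hi HP Ha. pose proof (Rabs_pos (a i)).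
    destruct (Nat.eq_dec i (S m)) as [->|Hne].
    + pose proof (Rmin_r t t'). specialize (Hstep' HP Ha). nra.
    + pose proof (Rmin_l t t'). specialize (Hstep i ltac:(lia) HP Ha). nra.
Qed.

Section Polytope.
Variables (eps : R) (n : nat) (w : nat -> R) (b : R) (K : nat)
  (S : nat -> nat -> bool) (Sinf : nat -> bool) (rho : nat -> nat).

Lemma inP_bounds x i : inP eps n w b K S Sinf rho x -> (1 <= i <= n)%nat -> 0 <= x i <= 1.
Proof.
  intros (H1 & _ & _ & Hout & Hin) Hi.
  destruct (Nat.eq_dec i 1) as [->|Hne]; [lra|].
  destruct (classic (covered K S Sinf i)) as [Hc|Hc].
  - apply Hin; [lia|exact Hc].
  - rewrite Hout by (lia || exact Hc); lra.
Qed.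

Lemma inP_01 x i : inP eps n w b K S Sinf rho x -> (1 <= i <= n)%nat ->
  ~ (0 < x i < 1) -> x i = 0 \/ x i = 1.
Proof.
  intros Hx Hi Hfrac. pose proof (inP_bounds x i Hx Hi).
  destruct (Req_dec (x i) 0); [left; assumption|].
  destruct (Req_dec (x i) 1); [right; assumption|].
  exfalso; apply Hfrac; lra.
Qed.

Lemma inP_frac_covered x i : inP eps n w b K S Sinf rho x -> (1 <= i <= n)%nat ->
  0 < x i < 1 -> (2 <= i)%nat /\ covered K S Sinf i.
Proof.
  intros (H1 & _ & _ & Hout & _) Hi Hfrac.
  destruct (Nat.eq_dec i 1) as [->|Hne]; [lra|].
  split; [lia|]. apply NNPP; intros Hc. rewrite Hout in Hfrac by (lia || exact Hc); lra.
Qed.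

Lemma inP_shift x d t s : inP eps n w b K S Sinf rho x -> (1 <= n)%nat ->
  (forall i, (1 <= i <= n)%nat -> d i <> 0 ->
     0 < x i < 1 /\ t * Rabs (d i) <= Rmin (x i) (1 - x i)) ->
  rsum (fun i => w i * d i) n = 0 ->
  (forall k, (1 <= k <= K)%nat -> setsum n (S k) x = INR (rho k) -> setsum n (S k) d = 0) ->
  (forall k, (1 <= k <= K)%nat -> rho k = Nceil eps -> setsum n (S k) x <> INR (rho k) ->
     t * Rabs (setsum n (S k) d) <= setsum n (S k) x - INR (rho k)) ->
  Rabs s <= t -> inP eps n w b K S Sinf rho (fun i => x i + s * d i).
Proof.
  intros Hx Hn Hd Hwd Htight Hslack Hs. pose proof Hx as (H1 & Hw & Hgrp & Hout & Hin).
  assert (Hd1 : d 1%nat = 0).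
  { apply NNPP; intros Hne. destruct (Hd 1%nat ltac:(lia) Hne) as [[_ Hlt] _]; lra. }
  split; [|split; [|split; [|split]]].
  - rewrite H1, Hd1; ring.
  - rewrite (rsum_ext n _ (fun i => w i * x i + s * (w i * d i))) by (intros; ring).
    rewrite rsum_plus, rsum_scal, Hwd; lra.
  - intros k Hk. rewrite setsum_shift. destruct (Hgrp k Hk) as [Heq Hge].
    destruct (classic (setsum n (S k) x = INR (rho k))) as [Ht|Ht].
    + rewrite Htight, Ht by assumption. split; intros; lra.
    + split; intros Hr; [exfalso; apply Ht, Heq, Hr|].
      pose proof (Hge Hr). pose proof (scaled_abs_bound _ _ _ _ Hs (Hslack k Hk Hr Ht)). lra.
  - intros i Hi Hc. rewrite Hout by assumption.
    destruct (Req_dec (d i) 0) as [E|E]; [rewrite E; ring|].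
    destruct (Hd i ltac:(lia) E) as [Hfr _]. rewrite Hout in Hfr by assumption; lra.
  - intros i Hi Hc. destruct (Req_dec (d i) 0) as [E|E].
    + rewrite E, Rmult_0_r, Rplus_0_r. apply Hin; assumption.
    + destruct (Hd i ltac:(lia) E) as [_ Hstep].
      pose proof (scaled_abs_bound _ _ _ _ Hs Hstep). pose proof (Rmin_l (x i) (1 - x i)).
      pose proof (Rmin_r (x i) (1 - x i)). lra.
Qed.

End Polytope.

Section ExtremePoint.
Variables (eps : R) (n : nat) (w : nat -> R) (b : R) (K : nat)
  (S : nat -> nat -> bool) (Sinf : nat -> bool) (rho : nat -> nat) (x : nat -> R).
Hypotheses (Hn : (1 <= n)%nat) (Hfam : valid_family n K S Sinf)
  (Hext : extreme_point eps n w b K S Sinf rho x).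

Local Notation frac i := (0 < x i < 1).

Definition tight (k : nat) : Prop := setsum n (S k) x = INR (rho k).

Definition loose (j : nat) : Prop :=
  Sinf j = true \/ exists k, (1 <= k <= K)%nat /\ S k j = true /\ ~ tight k.

Definition admissible (d : nat -> R) : Prop :=
  (forall i, (1 <= i <= n)%nat -> d i <> 0 -> frac i) /\
  (forall k, (1 <= k <= K)%nat -> tight k -> setsum n (S k) d = 0).

Lemma extreme_inP : inP eps n w b K S Sinf rho x.
Proof. exact (proj1 Hext). Qed.

Lemma admissible_comb u v a c :
  admissible u -> admissible v -> admissible (fun i => a * u i + c * v i).
Proof.
  intros [Hu Hut] [Hv Hvt]. split.
  - intros i Hi Hne. destruct (Req_dec (u i) 0) as [E|E]; [|exact (Hu i Hi E)].
    apply Hv; [exact Hi|]. intros E'. apply Hne. rewrite E, E'; ring.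
  - intros k Hk Ht. rewrite setsum_comb, Hut, Hvt by assumption; ring.
Qed.

Lemma admissible_null d : admissible d -> rsum (fun i => w i * d i) n = 0 ->
  forall i, (1 <= i <= n)%nat -> d i = 0.
Proof.
  intros [Hd Htight] Hwd. pose proof extreme_inP as Hx. pose proof Hx as (_ & _ & Hgrp & _).
  destruct (uniform_step (fun i => (1 <= i <= n)%nat) d (fun i => Rmin (x i) (1 - x i)) n)
    as [t1 [Ht1 Hstep1]].
  { intros i Hi Hne. destruct (Hd i Hi Hne). apply Rmin_pos; lra. }
  destruct (uniform_step (fun k => (1 <= k <= K)%nat /\ rho k = Nceil eps /\ ~ tight k)
    (fun k => setsum n (S k) d) (fun k => setsum n (S k) x - INR (rho k)) K) as [t2 [Ht2 Hstep2]].
  { intros k (Hk & Hr & Ht) _. destruct (Hgrp k Hk) as [_ Hge].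
    specialize (Hge Hr). unfold tight in Ht. lra. }
  set (t := Rmin t1 t2).
  assert (Hshift : forall s, Rabs s <= t -> inP eps n w b K S Sinf rho (fun i => x i + s * d i)).
  { intros s Hs. apply (inP_shift eps n w b K S Sinf rho x d t s Hx Hn); try assumption.
    - intros i Hi Hne. split; [exact (Hd i Hi Hne)|].
      pose proof (Hstep1 i ltac:(lia) Hi Hne). pose proof (Rmin_l t1 t2). pose proof (Rabs_pos (d i)).
      unfold t; nra.
    - intros k Hk Hr Ht. destruct (Req_dec (setsum n (S k) d) 0) as [E|E].
      + rewrite E, Rabs_R0, Rmult_0_r. destruct (Hgrp k Hk) as [_ Hge]. specialize (Hge Hr). lra.
      + pose proof (Hstep2 k ltac:(lia) (conj Hk (conj Hr Ht)) E). pose proof (Rmin_r t1 t2).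
        pose proof (Rabs_pos (setsum n (S k) d)). unfold t; nra. }
  assert (Ht : 0 < t) by (apply Rmin_pos; assumption).
  intros i Hi.
  assert (Hmid : forall j, (1 <= j <= n)%nat -> x j = / 2 * (x j + t * d j) + (1 - / 2) * (x j + - t * d j))
    by (intros; field).
  pose proof (proj2 Hext _ _ (/ 2) (Hshift t ltac:(rewrite Rabs_pos_eq; lra))
    (Hshift (- t) ltac:(rewrite Rabs_Ropp, Rabs_pos_eq; lra)) ltac:(lra) Hmid i Hi).
  nra.
Qed.

(* [w.v u - w.u v] is admissible and weight-free, hence zero; at [q] this forces [w.u = 0],
   so [u] itself is zero. *)
Lemma no_separated_admissible u v p q : admissible u -> admissible v ->
  (1 <= p <= n)%nat -> (1 <= q <= n)%nat -> u p <> 0 -> v q <> 0 -> u q = 0 -> False.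
Proof.
  intros Hu Hv Hp Hq Hup Hvq Huq.
  set (Wu := rsum (fun i => w i * u i) n). set (Wv := rsum (fun i => w i * v i) n).
  assert (Hcomb : forall i, (1 <= i <= n)%nat -> Wv * u i + - Wu * v i = 0).
  { apply admissible_null; [apply admissible_comb; assumption|].
    rewrite (rsum_ext n _ (fun i => Wv * (w i * u i) + - Wu * (w i * v i))) by (intros; ring).
    rewrite rsum_plus, !rsum_scal. fold Wu Wv. ring. }
  assert (HWu : Wu = 0).
  { specialize (Hcomb q Hq). rewrite Huq in Hcomb.
    apply (Rmult_eq_reg_r (v q)); [lra|assumption]. }
  exact (Hup (admissible_null u Hu HWu p Hp)).
Qed.

Lemma frac_loose_or_tight i : (1 <= i <= n)%nat -> frac i ->
  loose i \/ exists h, (1 <= h <= K)%nat /\ S h i = true /\ tight h.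
Proof.
  intros Hi Hfrac.
  destruct (inP_frac_covered eps n w b K S Sinf rho x i extreme_inP Hi Hfrac)
    as [_ [[k [Hk Hs]]|Hs]].
  - destruct (classic (tight k)); [right; exists k; auto|left; right; exists k; auto].
  - left; left; exact Hs.
Qed.

Lemma setsum_split_at h a : (1 <= a <= n)%nat -> S h a = true ->
  setsum n (S h) x = rsum (upd (fun i => if S h i then x i else 0) a 0) n + x a.
Proof. intros Ha Hs. unfold setsum. rewrite rsum_upd, Hs by exact Ha. ring. Qed.

Lemma tight_frac_partner h a : tight h -> (1 <= a <= n)%nat -> S h a = true -> frac a ->
  exists a', (1 <= a' <= n)%nat /\ a' <> a /\ S h a' = true /\ frac a'.
Proof.
  intros Ht Ha Hs Hfrac. apply NNPP; intros Hno.
  destruct (rsum_01 n (upd (fun i => if S h i then x i else 0) a 0)) as [m Hm].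
  { intros i Hi. destruct (Nat.eq_dec i a) as [->|Hne]; [rewrite upd_same; left; reflexivity|].
    rewrite upd_other by exact Hne. destruct (S h i) eqn:Hsi; [|left; reflexivity].
    apply (inP_01 eps n w b K S Sinf rho); [exact extreme_inP|exact Hi|].
    intros Hfi. apply Hno. exists i. auto. }
  unfold tight in Ht. rewrite (setsum_split_at h a Ha Hs), Hm in Ht.
  pose proof (nat_diff_between_0_2 (rho h) m ltac:(lra)). lra.
Qed.

Lemma admissible_basis j : (1 <= j <= n)%nat -> frac j -> loose j -> admissible (basis j).
Proof.
  intros Hj Hfrac Hl. destruct Hfam as (_ & _ & Hdis & Hdis_inf). split.
  - intros i Hi Hne. destruct (Nat.eq_dec i j) as [->|Hij]; [exact Hfrac|].
    exfalso; apply Hne. unfold basis; rewrite upd_other by exact Hij; reflexivity.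
  - intros k Hk Ht. rewrite setsum_basis by exact Hj. destruct (S k j) eqn:Hs; [|reflexivity].
    exfalso. destruct Hl as [Hinf|[k' (Hk' & Hs' & Hnt)]]; [exact (Hdis_inf k j Hk Hs Hinf)|].
    destruct (Nat.eq_dec k k') as [<-|Hkk']; [exact (Hnt Ht)|exact (Hdis k k' j Hk Hk' Hkk' Hs Hs')].
Qed.

Lemma admissible_pair h a a' : (1 <= h <= K)%nat -> (1 <= a <= n)%nat -> (1 <= a' <= n)%nat ->
  a <> a' -> S h a = true -> S h a' = true -> frac a -> frac a' -> admissible (upd (basis a) a' (-1)).
Proof.
  intros Hh Ha Ha' Hne Hs Hs' Hfa Hfa'. destruct Hfam as (_ & _ & Hdis & _). split.
  - intros i Hi Hd. destruct (Nat.eq_dec i a') as [->|Hia']; [exact Hfa'|].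
    destruct (Nat.eq_dec i a) as [->|Hia]; [exact Hfa|].
    exfalso; apply Hd. unfold basis; rewrite !upd_other by assumption; reflexivity.
  - intros k Hk _. rewrite setsum_upd, setsum_basis by assumption.
    unfold basis; rewrite upd_other by congruence; cbv beta.
    destruct (Nat.eq_dec k h) as [->|Hkh]; [rewrite Hs, Hs'; ring|].
    destruct (S k a) eqn:E; [exfalso; exact (Hdis k h a Hk Hh Hkh E Hs)|].
    destruct (S k a') eqn:E'; [exfalso; exact (Hdis k h a' Hk Hh Hkh E' Hs')|ring].
Qed.

Lemma frac_direction i : (1 <= i <= n)%nat -> frac i -> exists v, admissible v /\ v i = 1.
Proof.
  intros Hi Hfrac. destruct (frac_loose_or_tight i Hi Hfrac) as [Hl|(h & Hh & Hs & Ht)].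
  - exists (basis i). split; [exact (admissible_basis i Hi Hfrac Hl)|apply upd_same].
  - destruct (tight_frac_partner h i Ht Hi Hs Hfrac) as (i' & Hi' & Hne & Hs' & Hfi').
    exists (upd (basis i) i' (-1)). split.
    + exact (admissible_pair h i i' Hh Hi Hi' (not_eq_sym Hne) Hs Hs' Hfrac Hfi').
    + unfold basis; rewrite upd_other, upd_same by congruence; reflexivity.
Qed.

Lemma loose_frac_unique j i : (1 <= j <= n)%nat -> frac j -> loose j ->
  (1 <= i <= n)%nat -> frac i -> i = j.
Proof.
  intros Hj Hfj Hl Hi Hfi. destruct (Nat.eq_dec i j) as [E|Hne]; [exact E|exfalso].
  destruct (frac_direction i Hi Hfi) as (v & Hv & Hvi).
  apply (no_separated_admissible (basis j) v j i (admissible_basis j Hj Hfj Hl) Hv Hj Hi).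
  - unfold basis; rewrite upd_same; lra.
  - rewrite Hvi; lra.
  - unfold basis; rewrite upd_other by exact Hne; reflexivity.
Qed.

Lemma tight_frac_pair_unique h a a' i : (1 <= h <= K)%nat -> (1 <= a <= n)%nat ->
  (1 <= a' <= n)%nat -> a <> a' -> S h a = true -> S h a' = true -> frac a -> frac a' ->
  (1 <= i <= n)%nat -> frac i -> i = a \/ i = a'.
Proof.
  intros Hh Ha Ha' Hne Hs Hs' Hfa Hfa' Hi Hfi.
  destruct (Nat.eq_dec i a) as [E|Hia]; [left; exact E|].
  destruct (Nat.eq_dec i a') as [E|Hia']; [right; exact E|exfalso].
  destruct (frac_direction i Hi Hfi) as (v & Hv & Hvi).
  apply (no_separated_admissible _ v a i (admissible_pair h a a' Hh Ha Ha' Hne Hs Hs' Hfa Hfa') Hv Ha Hi).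
  - unfold basis; rewrite upd_other, upd_same by exact Hne; lra.
  - rewrite Hvi; lra.
  - unfold basis; rewrite !upd_other by assumption; reflexivity.
Qed.

Lemma tight_pair_sum h a a' : tight h -> (1 <= a <= n)%nat -> (1 <= a' <= n)%nat -> a <> a' ->
  S h a = true -> S h a' = true -> frac a -> frac a' ->
  (forall i, (1 <= i <= n)%nat -> i <> a -> i <> a' -> x i = 0 \/ x i = 1) -> x a + x a' = 1.
Proof.
  intros Ht Ha Ha' Hne Hs Hs' Hfa Hfa' Hint.
  set (g := upd (fun i => if S h i then x i else 0) a 0).
  destruct (rsum_01 n (upd g a' 0)) as [m Hm].
  { intros i Hi. destruct (Nat.eq_dec i a') as [->|Hia']; [rewrite upd_same; left; reflexivity|].
    unfold g. rewrite upd_other by exact Hia'.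
    destruct (Nat.eq_dec i a) as [->|Hia]; [rewrite upd_same; left; reflexivity|].
    rewrite upd_other by exact Hia. destruct (S h i); [exact (Hint i Hi Hia Hia')|left; reflexivity]. }
  unfold tight in Ht. rewrite (setsum_split_at h a Ha Hs) in Ht. fold g in Ht.
  rewrite rsum_upd in Hm by exact Ha'.
  unfold g in Hm at 2. rewrite upd_other, Hs' in Hm by congruence.
  pose proof (nat_diff_between_0_2 (rho h) m ltac:(lra)). lra.
Qed.

Theorem extreme_fractional_support :
  (forall i, (1 <= i <= n)%nat -> x i = 0 \/ x i = 1) \/
  (exists j, (1 <= j <= n)%nat /\ frac j /\ loose j /\
     forall i, (1 <= i <= n)%nat -> i <> j -> x i = 0 \/ x i = 1) \/
  (exists h a a', (1 <= h <= K)%nat /\ (1 <= a <= n)%nat /\ (1 <= a' <= n)%nat /\ a <> a' /\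
     S h a = true /\ S h a' = true /\ frac a /\ x a + x a' = 1 /\
     forall i, (1 <= i <= n)%nat -> i <> a -> i <> a' -> x i = 0 \/ x i = 1).
Proof.
  pose proof (inP_01 eps n w b K S Sinf rho x) as Hint.
  destruct (classic (exists j, (1 <= j <= n)%nat /\ frac j)) as [(j & Hj & Hfj)|Hnone].
  2:{ left. intros i Hi. apply Hint; [exact extreme_inP|exact Hi|]. intros Hfi. apply Hnone; eauto. }
  right. destruct (frac_loose_or_tight j Hj Hfj) as [Hl|(h & Hh & Hs & Ht)].
  - left. exists j. refine (conj Hj (conj Hfj (conj Hl _))).
    intros i Hi Hne. apply Hint; [exact extreme_inP|exact Hi|].
    intros Hfi. exact (Hne (loose_frac_unique j i Hj Hfj Hl Hi Hfi)).
  - right. destruct (tight_frac_partner h j Ht Hj Hs Hfj) as (j' & Hj' & Hne & Hs' & Hfj').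
    assert (Hothers : forall i, (1 <= i <= n)%nat -> i <> j -> i <> j' -> x i = 0 \/ x i = 1).
    { intros i Hi Hij Hij'. apply Hint; [exact extreme_inP|exact Hi|]. intros Hfi.
      destruct (tight_frac_pair_unique h j j' i Hh Hj Hj' (not_eq_sym Hne) Hs Hs' Hfj Hfj' Hi Hfi);
        contradiction. }
    exists h, j, j'. repeat (split; [assumption || exact (not_eq_sym Hne)|]).
    split; [|exact Hothers].
    exact (tight_pair_sum h j j' Ht Hj Hj' (not_eq_sym Hne) Hs Hs' Hfj Hfj' Hothers).
Qed.

End ExtremePoint.

Section Rounding.
Variables (eps : R) (n : nat) (c w : nat -> R) (b : R) (K : nat)
  (S : nat -> nat -> bool) (Sinf : nat -> bool) (rho : nat -> nat) (x : nat -> R).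
Hypotheses (Hn : (1 <= n)%nat) (Hx : inP eps n w b K S Sinf rho x) (Hfam : valid_family n K S Sinf)
  (Hc1 : c 1%nat = 1)
  (Hcdec : forall i, (1 <= i)%nat -> (i + 1 <= n)%nat -> c (i + 1)%nat <= c i)
  (Hc0 : forall i, (1 <= i <= n)%nat -> 0 <= c i)
  (Hw0 : forall i, (1 <= i <= n)%nat -> 0 <= w i)
  (Heps : 0 < eps <= 1 / 256)
  (Hord : eps_c_ordered eps c K S Sinf)
  (Hrho : forall k, (1 <= k <= K)%nat -> (1 <= rho k <= Nceil eps)%nat)
  (Hfrac : forall h, (1 <= h <= K)%nat -> (exists i, S h i = true /\ 0 < x i < 1) ->
     exists d : nat, (d <= Nat.min h (Dbound eps))%nat /\
       forall i j, S h i = true -> S h j = true -> c i <= (1 + eps) ^ d * c j).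

Local Notation cost := (rsum (fun i => c i * x i) n).
Local Notation group_cost k := (rsum (fun i => if S k i then c i * x i else 0) n).
Local Notation loose := (loose n K S Sinf rho x).

Lemma c_le_1 i : (1 <= i <= n)%nat -> c i <= 1.
Proof.
  induction i as [|i IH]; intros Hi; [lia|].
  destruct (Nat.eq_dec i 0) as [->|Hi0]; [rewrite Hc1; lra|].
  replace (Datatypes.S i) with (i + 1)%nat by lia.
  pose proof (Hcdec i ltac:(lia) ltac:(lia)). pose proof (IH ltac:(lia)). lra.
Qed.

Lemma group_cost_ge k a q : (forall i, S k i = true -> a <= q * c i) ->
  a * setsum n (S k) x <= q * group_cost k.
Proof.
  intros Ha. unfold setsum. rewrite <- !rsum_scal. apply rsum_le. intros i Hi.
  destruct (S k i) eqn:Hs; [|lra].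
  pose proof (Ha i Hs). pose proof (inP_bounds eps n w b K S Sinf rho x i Hx Hi). nra.
Qed.

Lemma rho_le_setsum k : (1 <= k <= K)%nat -> INR (rho k) <= setsum n (S k) x.
Proof.
  intros Hk. destruct Hx as (_ & _ & Hgrp & _). destruct (Hgrp k Hk) as [Heq Hge].
  destruct (Hrho k Hk). destruct (Nat.eq_dec (rho k) (Nceil eps)) as [E|E].
  - specialize (Hge E); lra.
  - rewrite Heq by lia; lra.
Qed.

Lemma one_le_setsum k : (1 <= k <= K)%nat -> 1 <= setsum n (S k) x.
Proof.
  intros Hk. pose proof (rho_le_setsum k Hk). destruct (Hrho k Hk) as [H1 _].
  apply le_INR in H1. simpl in H1. lra.
Qed.

Lemma group_nonempty k : (1 <= k <= K)%nat -> exists i, S k i = true.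
Proof.
  intros Hk. apply NNPP; intros Hno. pose proof (one_le_setsum k Hk) as H. unfold setsum in H.
  rewrite (rsum_ext n _ (fun _ => 0)), rsum_const in H; [lra|].
  intros i _. destruct (S k i) eqn:Hs; [exfalso; apply Hno; exists i; exact Hs|reflexivity].
Qed.

Lemma c_group_antitone k h i j : (1 <= k)%nat -> (k < h <= K)%nat ->
  S k i = true -> S h j = true -> c j <= c i.
Proof.
  destruct Hord as [Hadj _]. intros Hk Hkh. remember (h - k)%nat as m eqn:Hm.
  revert k i Hk Hkh Hm. induction m as [|m IH]; intros k i Hk Hkh Hm Hi Hj; [lia|].
  destruct (Nat.eq_dec h (k + 1)) as [->|Hne]; [exact (Hadj k i j Hk ltac:(lia) Hi Hj)|].
  destruct (group_nonempty (k + 1) ltac:(lia)) as [l Hl].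
  pose proof (Hadj k i l Hk ltac:(lia) Hi Hl).
  pose proof (IH (k + 1)%nat l ltac:(lia) ltac:(lia) ltac:(lia) Hl Hj). lra.
Qed.

(* Item 1 and the groups are disjoint parts of the support, and item 1 alone costs [c 1 x 1 = 1]. *)
Lemma cost_ge_groups m : (m <= K)%nat -> 1 + rsum (fun k => group_cost k) m <= cost.
Proof.
  intros Hm. destruct Hfam as (Hrange & _ & Hdis & _). destruct Hx as (H1 & _).
  set (f := fun i => c i * x i).
  assert (Hf1 : f 1%nat = 1) by (unfold f; rewrite Hc1, H1; ring).
  assert (Hrest : rsum (fun i => rsum (fun k => if S k i then f i else 0) m) n <= rsum (upd f 1 0) n).
  { apply rsum_le. intros i Hi. destruct (Nat.eq_dec i 1) as [->|Hi1].
    - rewrite upd_same, (rsum_ext m _ (fun _ => 0)), rsum_const; [lra|].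
      intros k Hk. destruct (S k 1%nat) eqn:Hs; [|reflexivity].
      specialize (Hrange k 1%nat ltac:(lia) Hs); lia.
    - rewrite upd_other by exact Hi1. apply rsum_indicator_le.
      + unfold f. pose proof (inP_bounds eps n w b K S Sinf rho x i Hx Hi). pose proof (Hc0 i Hi). nra.
      + intros k l Hk Hl Hsk Hsl. destruct (Nat.eq_dec k l) as [E|E]; [exact E|].
        exfalso; exact (Hdis k l i ltac:(lia) ltac:(lia) E Hsk Hsl). }
  rewrite (rsum_swap n m (fun k i => if S k i then f i else 0)) in Hrest.
  rewrite rsum_upd, Hf1 in Hrest by lia. unfold f in *. lra.
Qed.

Lemma one_le_cost : 1 <= cost.
Proof. pose proof (cost_ge_groups 0 ltac:(lia)). simpl in H. lra. Qed.

(* The [h - 1] groups before [S_h] each cost at least [c j], and so does item 1. *)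
Lemma index_mul_c_le_cost h j : (1 <= h <= K)%nat -> S h j = true -> INR h * c j <= cost.
Proof.
  intros Hh Hj. destruct Hfam as (Hrange & _).
  pose proof (Hrange h j Hh Hj) as Hjn.
  assert (Hcj : 0 <= c j <= 1) by (split; [apply Hc0|apply c_le_1]; lia).
  assert (Hgroups : rsum (fun _ => c j) (h - 1) <= rsum (fun k => group_cost k) (h - 1)).
  { apply rsum_le. intros k Hk.
    pose proof (one_le_setsum k ltac:(lia)).
    pose proof (group_cost_ge k (c j) 1 (fun i Hi => ltac:(rewrite Rmult_1_l;
      exact (c_group_antitone k h i j ltac:(lia) ltac:(lia) Hi Hj)))). nra. }
  rewrite rsum_const in Hgroups. pose proof (cost_ge_groups (h - 1) ltac:(lia)).
  replace (INR h) with (INR (h - 1) + 1) by (rewrite <- S_INR; f_equal; lia). lra.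
Qed.

Lemma group_cost_le_cost k : group_cost k <= cost.
Proof.
  apply rsum_le. intros i Hi. destruct (S k i); [lra|].
  pose proof (inP_bounds eps n w b K S Sinf rho x i Hx Hi). pose proof (Hc0 i Hi). nra.
Qed.

(* A non-tight group has [rho_k = ceil(1/eps)], so it holds at least [1/eps] units of items
   costing at least [c_j / (1 + eps)^d >= c_j / 2]. *)
Lemma loose_c_le j : (1 <= j <= n)%nat -> 0 < x j < 1 -> loose j -> c j <= 2 * eps * cost.
Proof.
  intros Hj Hfj Hl. pose proof one_le_cost. destruct Hord as [_ Hinf].
  destruct Hl as [Hs|(k & Hk & Hs & Hnt)]; [destruct (Hinf j Hs); nra|].
  destruct (Hfrac k Hk (ex_intro _ j (conj Hs Hfj))) as (d & Hd & Hspread).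
  destruct (pow_1_plus_eps_Dbound eps d Heps ltac:(lia)) as [[Hq1 Hq2] Hd1].
  assert (Hrk : rho k = Nceil eps).
  { destruct Hx as (_ & _ & Hgrp & _). destruct (Hgrp k Hk) as [Heq _].
    destruct (Hrho k Hk). destruct (Nat.eq_dec (rho k) (Nceil eps)) as [E|E]; [exact E|].
    exfalso; apply Hnt, Heq; lia. }
  pose proof (group_cost_ge k (c j) ((1 + eps) ^ d) (fun i Hi => Hspread j i Hs Hi)).
  pose proof (group_cost_le_cost k). pose proof (rho_le_setsum k Hk). rewrite Hrk in *.
  pose proof (Nceil_ge_inv eps ltac:(lra)). pose proof (Hc0 j Hj).
  assert (Hinv : c j * / eps <= 2 * cost) by nra.
  apply (Rmult_le_reg_r (/ eps)); [apply Rinv_0_lt_compat; lra|].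
  replace (2 * eps * cost * / eps) with (2 * cost) by (field; lra). exact Hinv.
Qed.

Lemma inP_upd_loose j : (1 <= j <= n)%nat -> loose j -> inP eps n w b K S Sinf rho (upd x j 1).
Proof.
  intros Hj Hl. pose proof Hx as (H1 & Hw & Hgrp & Hout & Hin).
  destruct Hfam as (Hrange & Hrange_inf & Hdis & Hdis_inf).
  assert (Hcov : covered K S Sinf j).
  { destruct Hl as [Hs|(k & Hk & Hs & _)]; [right; exact Hs|left; exists k; auto]. }
  assert (Hj2 : (2 <= j)%nat).
  { destruct Hl as [Hs|(k & Hk & Hs & _)]; [apply Hrange_inf, Hs|apply (Hrange k j Hk Hs)]. }
  pose proof (inP_bounds eps n w b K S Sinf rho x j Hx Hj). pose proof (Hw0 j Hj).
  split; [|split; [|split; [|split]]].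
  - rewrite upd_other by lia; exact H1.
  - rewrite rsum_mul_upd by exact Hj. nra.
  - intros k Hk. rewrite setsum_upd by exact Hj. destruct (S k j) eqn:Hs.
    + assert (Hnt : ~ tight n S rho x k).
      { destruct Hl as [Hinf|(k' & Hk' & Hs' & Hnt)]; [exfalso; exact (Hdis_inf k j Hk Hs Hinf)|].
        destruct (Nat.eq_dec k k') as [<-|E]; [exact Hnt|exfalso; exact (Hdis k k' j Hk Hk' E Hs Hs')]. }
      destruct (Hgrp k Hk) as [Heq Hge]. split; intros Hr; [exfalso; exact (Hnt (Heq Hr))|].
      specialize (Hge Hr). lra.
    + rewrite Rplus_0_r. exact (Hgrp k Hk).
  - intros i Hi Hc. rewrite upd_other by (intros ->; exact (Hc Hcov)). exact (Hout i Hi Hc).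
  - intros i Hi Hc. destruct (Nat.eq_dec i j) as [->|E]; [rewrite upd_same; lra|].
    rewrite upd_other by exact E. exact (Hin i Hi Hc).
Qed.

Lemma inP_upd_pair h a a' : (1 <= h <= K)%nat -> (1 <= a <= n)%nat -> (1 <= a' <= n)%nat ->
  a <> a' -> S h a = true -> S h a' = true -> x a + x a' = 1 -> w a' <= w a ->
  inP eps n w b K S Sinf rho (upd (upd x a 1) a' 0).
Proof.
  intros Hh Ha Ha' Hne Hs Hs' Hsum Hwaa'. pose proof Hx as (H1 & Hw & Hgrp & Hout & Hin).
  destruct Hfam as (Hrange & _ & Hdis & _).
  pose proof (Hrange h a Hh Hs). pose proof (Hrange h a' Hh Hs').
  pose proof (inP_bounds eps n w b K S Sinf rho x a' Hx Ha').
  split; [|split; [|split; [|split]]].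
  - rewrite !upd_other by lia; exact H1.
  - rewrite rsum_mul_upd, rsum_mul_upd, upd_other by (assumption || congruence). nra.
  - intros k Hk. rewrite setsum_upd, setsum_upd, upd_other by (assumption || congruence).
    destruct (Nat.eq_dec k h) as [->|Ekh].
    + rewrite Hs, Hs'. replace (setsum n (S h) x + (1 - x a) + (0 - x a')) with (setsum n (S h) x) by lra.
      exact (Hgrp h Hk).
    + destruct (S k a) eqn:E; [exfalso; exact (Hdis k h a Hk Hh Ekh E Hs)|].
      destruct (S k a') eqn:E'; [exfalso; exact (Hdis k h a' Hk Hh Ekh E' Hs')|].
      rewrite !Rplus_0_r. exact (Hgrp k Hk).
  - intros i Hi Hc. rewrite !upd_other.
    + exact (Hout i Hi Hc).
    + intros ->. exact (Hc (or_introl (ex_intro _ h (conj Hh Hs)))).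
    + intros ->. exact (Hc (or_introl (ex_intro _ h (conj Hh Hs')))).
  - intros i Hi Hc. unfold upd.
    destruct (Nat.eqb_spec i a'); [lra|]. destruct (Nat.eqb_spec i a); [lra|]. exact (Hin i Hi Hc).
Qed.

Definition cheap_integral (xb : nat -> R) : Prop :=
  inP eps n w b K S Sinf rho xb /\ (forall i, (1 <= i <= n)%nat -> xb i = 0 \/ xb i = 1) /\
  rsum (fun i => c i * xb i) n <= (1 + 2 * eps) * cost.

Lemma rounding_integral : (forall i, (1 <= i <= n)%nat -> x i = 0 \/ x i = 1) ->
  exists xb, cheap_integral xb.
Proof. intros Hint. exists x. pose proof one_le_cost. split; [exact Hx|split; [exact Hint|nra]]. Qed.

Lemma rounding_loose j : (1 <= j <= n)%nat -> 0 < x j < 1 -> loose j ->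
  (forall i, (1 <= i <= n)%nat -> i <> j -> x i = 0 \/ x i = 1) -> exists xb, cheap_integral xb.
Proof.
  intros Hj Hfj Hl Hint. exists (upd x j 1). split; [|split].
  - exact (inP_upd_loose j Hj Hl).
  - intros i Hi. destruct (Nat.eq_dec i j) as [->|E]; [rewrite upd_same; right; reflexivity|].
    rewrite upd_other by exact E. exact (Hint i Hi E).
  - rewrite rsum_mul_upd by exact Hj.
    pose proof (loose_c_le j Hj Hfj Hl). pose proof (Hc0 j Hj). nra.
Qed.

(* Moving the mass [x a'] onto [a] costs [x a' (c a - c a') <= ((1 + eps)^d - 1) c a' <= 2 eps h c a']. *)
Lemma rounding_ordered_pair h a a' : (1 <= h <= K)%nat -> (1 <= a <= n)%nat -> (1 <= a' <= n)%nat ->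
  a <> a' -> S h a = true -> S h a' = true -> 0 < x a < 1 -> x a + x a' = 1 -> w a' <= w a ->
  (forall i, (1 <= i <= n)%nat -> i <> a -> i <> a' -> x i = 0 \/ x i = 1) ->
  exists xb, cheap_integral xb.
Proof.
  intros Hh Ha Ha' Hne Hs Hs' Hfa Hsum Hwaa' Hint. exists (upd (upd x a 1) a' 0). split; [|split].
  - exact (inP_upd_pair h a a' Hh Ha Ha' Hne Hs Hs' Hsum Hwaa').
  - intros i Hi. unfold upd.
    destruct (Nat.eqb_spec i a'); [left; reflexivity|]. destruct (Nat.eqb_spec i a); [right; reflexivity|].
    exact (Hint i Hi ltac:(assumption) ltac:(assumption)).
  - rewrite rsum_mul_upd, rsum_mul_upd, upd_other by (assumption || congruence).
    destruct (Hfrac h Hh (ex_intro _ a (conj Hs Hfa))) as (d & Hd & Hspread).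
    destruct (pow_1_plus_eps_Dbound eps d Heps ltac:(lia)) as [[Hq1 Hq2] _].
    pose proof (Hspread a a' Hs Hs'). pose proof (index_mul_c_le_cost h a' Hh Hs').
    assert (Hdh : INR d <= INR h) by (apply le_INR; lia).
    pose proof (Hc0 a Ha). pose proof (Hc0 a' Ha'). pose proof one_le_cost.
    assert (Hmove : x a' * (c a - c a') <= 2 * eps * INR h * c a').
    { assert (x a' * (c a - c a') <= ((1 + eps) ^ d - 1) * c a').
      { destruct (Rle_dec (c a) (c a')); nra. }
      assert (((1 + eps) ^ d - 1) * c a' <= 2 * eps * INR d * c a') by nra.
      assert (2 * eps * INR d * c a' <= 2 * eps * INR h * c a')
        by (apply Rmult_le_compat_r; [|apply Rmult_le_compat_l]; lra).
      lra. }
    nra.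
Qed.

Lemma rounding_pair h a a' : (1 <= h <= K)%nat -> (1 <= a <= n)%nat -> (1 <= a' <= n)%nat ->
  a <> a' -> S h a = true -> S h a' = true -> 0 < x a < 1 -> x a + x a' = 1 ->
  (forall i, (1 <= i <= n)%nat -> i <> a -> i <> a' -> x i = 0 \/ x i = 1) ->
  exists xb, cheap_integral xb.
Proof.
  intros Hh Ha Ha' Hne Hs Hs' Hfa Hsum Hint. destruct (Rle_dec (w a') (w a)) as [Hw|Hw].
  - exact (rounding_ordered_pair h a a' Hh Ha Ha' Hne Hs Hs' Hfa Hsum Hw Hint).
  - apply (rounding_ordered_pair h a' a Hh Ha' Ha (not_eq_sym Hne) Hs' Hs); try lra.
    intros i Hi Hia' Hia. exact (Hint i Hi Hia Hia').
Qed.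

End Rounding.

Theorem lemma3 (n : nat) (c w : nat -> R) (b eps : R) (K : nat)
    (S : nat -> nat -> bool) (Sinf : nat -> bool) (rho : nat -> nat) (xs : nat -> R)
    (Hn : (1 <= n)%nat)
    (Hc1 : c 1%nat = 1)
    (Hcdec : forall i, (1 <= i)%nat -> (i + 1 <= n)%nat -> c (i + 1)%nat <= c i)
    (Hc0 : forall i, (1 <= i <= n)%nat -> 0 <= c i)
    (Hw0 : forall i, (1 <= i <= n)%nat -> 0 <= w i)
    (Heps : 0 < eps <= 1 / 256)
    (Hfam : valid_family n K S Sinf)
    (Hord : eps_c_ordered eps c K S Sinf)
    (Hrho : forall k, (1 <= k <= K)%nat -> (1 <= rho k <= Nceil eps)%nat)
    (Hext : extreme_point eps n w b K S Sinf rho xs)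
    (Hfrac : forall h, (1 <= h <= K)%nat ->
       (exists i, S h i = true /\ 0 < xs i < 1) ->
       exists d : nat, (d <= Nat.min h (Dbound eps))%nat /\
         forall i j, S h i = true -> S h j = true -> c i <= (1 + eps) ^ d * c j) :
  exists xb : nat -> R,
    inP eps n w b K S Sinf rho xb /\
    (forall i, (1 <= i <= n)%nat -> xb i = 0 \/ xb i = 1) /\
    rsum (fun i => c i * xb i) n <= (1 + 2 * eps) * rsum (fun i => c i * xs i) n.
Proof.
  pose proof (extreme_inP eps n w b K S Sinf rho xs Hext) as Hx.
  destruct (extreme_fractional_support eps n w b K S Sinf rho xs Hn Hfam Hext)
    as [Hint|[(j & Hj & Hfj & Hl & Hint)|(h & a & a' & Hh & Ha & Ha' & Hne & Hs & Hs' & Hfa & Hsum & Hint)]].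
  - eapply rounding_integral; eauto.
  - eapply rounding_loose; eauto.
  - eapply rounding_pair with (h := h) (a := a) (a' := a'); eauto.
Qed.
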